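(* Let $C=\{c_1,\dots,c_m\}$ and fix the axis $c_1\lhd\dots\lhd c_m$. For all $i,j\in[m]$, the probability that candidate $c_j$ appears in position $i$ in a vote sampled from the Walsh distribution $\mathcal{D}_{\mathrm{SP}}^{\mathrm{Wal}}$ is \[\frac{1}{2^{m-i+1}}\binom{m-i}{j-1}\mathbb{1}_{j\le m-i+1}+\frac{1}{2^{m-i+1}}\binom{m-i}{j-i}\mathbb{1}_{j>i-1}.\]
   Context: A vote over $C$ is a total order on $C$ (position 1 is the top). A vote is single-peaked with respect to the axis $c_1\lhd\dots\lhd c_m$ if for every $t\in[m]$ its $t$ top-ranked candidates form a set of consecutive candidates $\{c_a,c_{a+1},\dots,c_b\}$. The Walsh distribution $\mathcal{D}_{\mathrm{SP}}^{\mathrm{Wal}}$ assigns probability $1/2^{m-1}$ to each vote single-peaked with respect to this axis and probability $0$ to all other votes. $\mathbb{1}$ denotes an indicator. *)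

From mathcomp Require Import all_boot all_order all_algebra all_fingroup.
Set Implicit Arguments. Unset Strict Implicit. Unset Printing Implicit Defensive.
Import Order.TTheory GRing.Theory Num.Theory.

(* Candidates c_1..c_m are modelled as 'I_m (c_{k+1} <-> k), positions 1..m
   likewise (position p+1 <-> p).  A vote is a permutation v : {perm 'I_m},
   v p = candidate ranked at (0-indexed) position p.  The axis is the natural
   order c_1 < ... < c_m on 'I_m. *)

Definition vote (m : nat) := {perm 'I_m}.

Definition top_set (m : nat) (v : vote m) (t : nat) : {set 'I_m} :=
  [set v p | p : 'I_m & p < t].

Definition single_peaked (m : nat) (v : vote m) : bool :=
  [forall t : 'I_m.+1, (0 < t) ==>
     [exists a : 'I_m, exists b : 'I_m,
        top_set v t == [set c : 'I_m | (a <= c) && (c <= b)]]].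

Definition walsh (m : nat) (v : vote m) : rat :=
  if single_peaked v then (1 / (2 ^+ (m.-1)))%R else 0%R.

Definition at_position (m : nat) (v : vote m) (i j : nat) : bool :=
  [exists p : 'I_m, (p.+1 == i) && ((v p).+1 == j)].

Definition walsh_pos_prob (m i j : nat) : rat :=
  (\sum_(v : vote m | at_position v i j) walsh v)%R.

From mathcomp Require Import all_boot all_order all_algebra all_fingroup ring.
Set Implicit Arguments. Unset Strict Implicit. Unset Printing Implicit Defensive.
Import Order.TTheory GRing.Theory Num.Theory.

(* In a single-peaked vote the last-ranked candidate is an end of the axis,
   c_1 or c_m, and deleting it leaves a single-peaked vote on the other m - 1
   candidates; conversely, ranking either end last below a single-peaked vote
   on the others gives a single-peaked vote.  Hence there are 2^(m-1)
   single-peaked votes, and the number N(m, i, j) of those ranking c_j at a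
   position i < m obeys Pascal's rule N(m, i, j) = N(m-1, i, j) + N(m-1, i, j-1),
   while c_1 and c_m are each ranked last by 2^(m-2) of them.  Solving gives
   2 N(m, i, j) = 2^(i-1) (C(m-i, j-1) + [i <= j] C(m-i, j-i)). *)

Definition is_interval n (S : {set 'I_n}) : bool :=
  [forall x in S, forall y in S, forall z : 'I_n, (x <= z <= y)%N ==> (z \in S)].

Lemma is_intervalP n (S : {set 'I_n}) :
  reflect (forall x y z : 'I_n, x \in S -> y \in S -> (x <= z <= y)%N -> z \in S)
          (is_interval S).
Proof.
apply: (iffP forall_inP) => [H x y z /H/forall_inP/(_ y) H' yS | H x xS].
  by move: (H' yS) => /forallP/(_ z)/implyP.
by apply/forall_inP => y yS; apply/forallP => z; apply/implyP; apply: H.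
Qed.

Lemma mem_top_set m (v : vote m) t c :
  reflect (exists2 p : 'I_m, (p < t)%N & c = v p) (c \in top_set v t).
Proof.
by apply: (iffP imsetP) => -[p]; rewrite ?inE => pt ->; exists p; rewrite ?inE.
Qed.

Lemma single_peakedP m (v : vote m) :
  reflect (forall t, (0 < t <= m)%N -> is_interval (top_set v t)) (single_peaked v).
Proof.
apply: (iffP forallP) => [H t /andP[t0 tm] | H t].
  have /implyP/(_ t0)/existsP[a /existsP[b /eqP->]] := H (Ordinal (tm : t < m.+1)).
  apply/is_intervalP => x y z; rewrite !inE => /andP[ax _] /andP[_ yb] /andP[xz zy].
  by rewrite (leq_trans ax xz) (leq_trans zy yb).
apply/implyP => t0; have tm : (t <= m)%N by rewrite -ltnS.
have /is_intervalP top_int := H t (introT andP (conj t0 tm)).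
pose p0 := Ordinal (leq_trans t0 tm).
have top0 : v p0 \in top_set v t by apply/mem_top_set; exists p0.
have [a aS amin] := arg_minnP val top0; have [b bS bmax] := arg_maxnP val top0.
apply/existsP; exists a; apply/existsP; exists b; apply/eqP/setP => c; rewrite inE.
apply/idP/idP => [cS | abc]; first by rewrite amin // (bmax c cS : (c <= b)%N).
exact: top_int abc.
Qed.

Lemma top_set_all m (v : vote m) : top_set v m = [set: 'I_m].
Proof.
by apply/setP => c; rewrite inE; apply/mem_top_set; exists ((v^-1)%g c); rewrite ?permKV.
Qed.

Lemma is_interval_setT n : is_interval [set: 'I_n].
Proof. by apply/is_intervalP => *; rewrite inE. Qed.

Lemma ord_lift_max n (p : 'I_n.+1) : (p < n)%N -> exists p' : 'I_n, p = lift ord_max p'.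
Proof. by move=> pn; exists (Ordinal pn); apply: ord_inj; rewrite lift_max. Qed.

(* [lift_perm ord_max k s] ranks [k] last and the other candidates in the
   relative order given by [s]. *)
Lemma top_set_lift_perm n (k : 'I_n.+1) (s : 'S_n) t :
  (t <= n)%N -> top_set (lift_perm ord_max k s) t = lift k @: top_set s t.
Proof.
move=> tn; apply/setP => c.
apply/mem_top_set/imsetP => [[p pt ->] | [_ /mem_top_set[p pt ->] ->]].
  have [p' pE] := ord_lift_max (leq_trans pt tn).
  move: pt; rewrite pE lift_max lift_perm_lift => pt.
  by exists (s p') => //; apply/mem_top_set; exists p'.
by exists (lift ord_max p); rewrite ?lift_perm_lift ?lift_max.
Qed.

Lemma is_interval_lift_end n (k : 'I_n.+1) (S : {set 'I_n}) :
  (k == ord0) || (k == ord_max) -> is_interval (lift k @: S) = is_interval S.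
Proof.
move=> k_end; apply/is_intervalP/is_intervalP => S_int.
  move=> x y z xS yS xzy; rewrite -(mem_imset _ _ (@lift_inj _ k)).
  by apply: (S_int (lift k x) (lift k y)); rewrite ?imset_f // /= !leq_bump2.
move=> _ _ z /imsetP[x xS ->] /imsetP[y yS ->] /andP[xz zy].
have /unlift_some[z' zE _] : k != z.
  case/orP: k_end xz zy => /eqP-> xz zy; rewrite -val_eqE /= neq_ltn.
    by rewrite (leq_trans _ xz).
  by rewrite (leq_ltn_trans zy) ?orbT // lift_max.
rewrite zE; apply: imset_f; apply: (S_int x y z' xS yS).
by move: xz zy; rewrite zE /= !leq_bump2 => -> ->.
Qed.

Lemma single_peaked_lift_perm n (k : 'I_n.+1) (s : 'S_n) :
  (k == ord0) || (k == ord_max) -> single_peaked (lift_perm ord_max k s) = single_peaked s.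
Proof.
move=> k_end; apply/single_peakedP/single_peakedP => sp_int t /andP[t0 tn].
  by rewrite -(is_interval_lift_end _ k_end) -top_set_lift_perm // sp_int // t0 leqW.
move: tn; rewrite leq_eqVlt ltnS => /orP[/eqP-> | tn].
  by rewrite top_set_all is_interval_setT.
by rewrite top_set_lift_perm // is_interval_lift_end // sp_int ?t0.
Qed.

Lemma top_set_but_last n (v : vote n.+1) : top_set v n = [set~ v ord_max].
Proof.
apply/setP => c; rewrite in_setC1; apply/mem_top_set/idP => [[p pn ->] | c_last].
  by rewrite (inj_eq perm_inj) -val_eqE /= neq_ltn pn.
exists ((v^-1)%g c); rewrite ?permKV //.
rewrite ltn_neqAle -ltnS ltn_ord andbT; apply: contra c_last => /eqP last.
by rewrite -[c](permKV v) (_ : (v^-1)%g c = ord_max) //; apply: val_inj.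
Qed.

Lemma single_peaked_last n (v : vote n.+2) :
  single_peaked v -> (v ord_max == ord0) || (v ord_max == ord_max).
Proof.
move=> /single_peakedP/(_ n.+1 (leqnSn _)) /is_intervalP; rewrite top_set_but_last => top_int.
apply/contraT; rewrite negb_or => /andP[last_ne0 last_neM].
have := top_int ord0 ord_max (v ord_max); rewrite !in_setC1 eqxx.
by rewrite eq_sym last_ne0 eq_sym last_neM leq0n -ltnS ltn_ord => /(_ isT isT isT).
Qed.

Lemma lift_perm_inj n (i j : 'I_n.+1) : injective (lift_perm i j).
Proof.
move=> s t st; apply/permP => k; apply: (@lift_inj _ j).
by rewrite -!(lift_perm_lift i) st.
Qed.

Lemma lift_perm_surj n (i j : 'I_n.+1) (v : 'S_n.+1) :
  v i = j -> exists s : 'S_n, v = lift_perm i j s.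
Proof.
move=> vij; have v_lift k : j != v (lift i k) by rewrite -vij (inj_eq perm_inj) neq_lift.
pose f k := odflt k (unlift j (v (lift i k))).
have fK k : lift j (f k) = v (lift i k).
  by rewrite /f; case/unlift_some: (v_lift k) => k' -> _; rewrite liftK.
have f_inj : injective f by move=> k1 k2 /(congr1 (lift j)); rewrite !fK => /perm_inj/lift_inj.
exists (perm f_inj); apply/permP => k; case: (unliftP i k) => [k'|] ->.
  by rewrite lift_perm_lift permE fK.
by rewrite lift_perm_id.
Qed.

Lemma card_lift_perm n (i j : 'I_n.+1) (Q : pred 'S_n.+1) :
  #|[pred v | Q v && (v i == j)]| = #|[pred s : 'S_n | Q (lift_perm i j s)]|.
Proof.
rewrite -(card_image (@lift_perm_inj n i j)); apply: eq_card => v; rewrite inE.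
apply/andP/imageP => [[Qv /eqP/lift_perm_surj[s vE]] | [s Qs ->]].
  by exists s; rewrite // inE -vE.
by rewrite lift_perm_id eqxx.
Qed.

Definition sp_card m (P : pred (vote m)) : nat := #|[pred v | single_peaked v && P v]|.

Lemma sp_card_split n (P : pred (vote n.+2)) :
  sp_card P = sp_card (P \o lift_perm ord_max ord_max) + sp_card (P \o lift_perm ord_max ord0).
Proof.
have sp_card_lift k : (k == ord0) || (k == ord_max) ->
    #|[pred v : vote n.+2 | (single_peaked v && P v) && (v ord_max == k)]| =
    sp_card (P \o lift_perm ord_max k).
  move=> k_end; rewrite card_lift_perm; apply: eq_card => s.
  by rewrite !inE single_peaked_lift_perm.
rewrite -!sp_card_lift ?eqxx ?orbT // {1}/sp_card.
rewrite -(cardID [pred v : vote n.+2 | v ord_max == ord_max]).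
congr (_ + _); apply: eq_card => v; rewrite !inE // andbC; apply: andb_id2l => /andP[sp_v _].
by case/orP: (single_peaked_last sp_v) => /eqP->; rewrite eqxx.
Qed.

Lemma sp_card_const m (b : bool) :
  sp_card (fun _ : vote m => b) = b * sp_card (@predT (vote m)).
Proof.
by case: b; rewrite ?mul1n //= mul0n; apply: eq_card0 => v; rewrite !inE andbF.
Qed.

Lemma sp_card_predT n : sp_card (@predT (vote n.+1)) = 2 ^ n.
Proof.
elim: n => [|n IH].
  rewrite /sp_card -[RHS](card_Sn 1); apply: eq_card => v; rewrite !inE andbT.
  apply/single_peakedP => t /andP[t0 t1].
  by rewrite (_ : t = 1%N) ?top_set_all ?is_interval_setT //; apply/eqP; rewrite eqn_leq t1.
by rewrite sp_card_split addnn IH expnS mul2n.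
Qed.

Lemma at_position_lift_perm n (k : 'I_n.+1) (s : 'S_n) i j : (i <= n)%N ->
  at_position (lift_perm ord_max k s) i j =
  [exists p : 'I_n, (p.+1 == i) && ((lift k (s p)).+1 == j)].
Proof.
move=> i_n; apply/existsP/existsP => [[p /andP[/eqP pi vj]] | [p pij]].
  have [p' pE] := ord_lift_max (leq_trans (eq_leq pi) i_n).
  by exists p'; move: pi vj; rewrite pE lift_max lift_perm_lift => -> ->; rewrite eqxx.
by exists (lift ord_max p); rewrite lift_perm_lift lift_max.
Qed.

Lemma at_position_last n (v : vote n.+1) j : at_position v n.+1 j = ((v ord_max).+1 == j).
Proof.
apply/existsP/idP => [[p /andP[/eqP[pn] vj]] | vj]; last by exists ord_max; rewrite eqxx.
by rewrite (_ : ord_max = p) //; apply: val_inj.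
Qed.

Definition sp_count m i j : nat := sp_card (fun v : vote m => at_position v i j).

Lemma sp_count0 m i : sp_count m i 0 = 0.
Proof. by apply: eq_card0 => v; rewrite !inE; apply/andP => -[_ /existsP[p]]; rewrite andbF. Qed.

Lemma sp_count_inner n i j : (i <= n.+1)%N ->
  sp_count n.+2 i j.+1 = sp_count n.+1 i j.+1 + sp_count n.+1 i j.
Proof.
move=> i_n; rewrite /sp_count sp_card_split.
by congr (_ + _); apply: eq_card => s; rewrite !inE /= at_position_lift_perm //;
  congr (_ && _); apply: eq_existsb => p; rewrite ?lift_max ?lift0.
Qed.

Lemma sp_count_last n j : sp_count n.+2 n.+2 j = ((j == n.+2) + (j == 1)) * 2 ^ n.
Proof.
rewrite /sp_count sp_card_split mulnDl -sp_card_predT.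
by congr (_ + _); rewrite -sp_card_const; apply: eq_card => s;
  rewrite !inE /= at_position_last lift_perm_id eq_sym.
Qed.

Lemma binS_subn r i j :
  (i <= j.+1) * 'C(r.+1, j.+1 - i) = (i <= j.+1) * 'C(r, j.+1 - i) + (i <= j) * 'C(r, j - i).
Proof.
case: (ltngtP i j.+1) => [ij | ji | ->]; last by rewrite ltnn subnn !bin0.
  by rewrite ltnS in ij; rewrite ij (subSn ij) binS !mul1n.
by rewrite leqNgt (ltn_trans (ltnSn j) ji).
Qed.

Lemma sp_count_one j : sp_count 1 1 j.+1 = (j == 0).
Proof.
rewrite -[RHS]muln1 -[X in _ * X](sp_card_predT 0) -sp_card_const; apply: eq_card => v.
by rewrite !inE at_position_last eqSS [v ord_max]ord1 eq_sym.
Qed.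

(* The factor [(i <= j)] discards the junk value of the truncated [j - i]. *)
Lemma sp_countE i r j :
  2 * sp_count (i.+1 + r) i.+1 j.+1 = 2 ^ i * ('C(r, j) + (i <= j) * 'C(r, j - i)).
Proof.
elim: r j => [|r IH] j.
  rewrite addn0 !bin0n; case: i => [|n].
    by rewrite sp_count_one expn0 subn0 leq0n !mul1n addnn mul2n.
  have -> : (n < j) * (j - n.+1 == 0) = (j == n.+1) by rewrite mulnb subn_eq0 -eqn_leq eq_sym.
  by rewrite sp_count_last !eqSS expnS -mulnA [in RHS]addnC [_ * 2 ^ n]mulnC.
rewrite addnS sp_count_inner ?leq_addr // mulnDr IH.
case: j => [|j]; first by rewrite sp_count0 muln0 addn0 !bin0.
by rewrite IH -mulnDr binS binS_subn addnACA.
Qed.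

Local Open Scope ring_scope.

Lemma walsh_pos_probE m i j : walsh_pos_prob m i j = (sp_count m i j)%:R / 2 ^+ m.-1.
Proof.
rewrite /walsh_pos_prob /walsh -big_mkcondr /= sumr_const -(mulr_natr (1 / _)) mul1r mulrC.
by congr (_%:R * _); apply: eq_card => v; rewrite !inE andbC.
Qed.

Theorem corollary1 (m i j : nat) (Hi : (1 <= i <= m)%N) (Hj : (1 <= j <= m)%N) :
  walsh_pos_prob m i j =
    1 / (2 ^+ (m - i + 1)) * ('C(m - i, j - 1))%:R * ((j <= m - i + 1)%N)%:R
  + 1 / (2 ^+ (m - i + 1)) * ('C(m - i, j - i))%:R * ((j > i - 1)%N)%:R.
Proof.
case: i Hi => [//|i] /andP[_ im]; case: j Hj => [//|j] _.
have [r ->] : exists r, m = (i.+1 + r)%N by exists (m - i.+1)%N; rewrite subnKC.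
rewrite walsh_pos_probE addKn !subSS !subn0 addn1 !ltnS.
have bin_trunc : ('C(r, j) * (j <= r) = 'C(r, j))%N.
  by case: leqP => [_ | /bin_small->]; rewrite ?muln1.
rewrite !mul1r -!mulrA -!natrM bin_trunc [('C(r, j - i) * _)%N]mulnC -mulrDr -natrD.
have count : (sp_count (i.+1 + r) i.+1 j.+1)%:R =
    (2 ^ i * ('C(r, j) + (i <= j) * 'C(r, j - i)))%:R / 2 :> rat.
  by rewrite -sp_countE natrM mulrC mulKf.
rewrite count natrM natrX addSn /= exprD exprS.
by field; rewrite !expf_neq0.
Qed.
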